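(* There is an absolute constant $C>0$ such that for every $n\ge 1$ and every unweighted congestion game $\mathcal{G}$ with $n$ players and affine latency functions, $\mathrm{PoA}_{\max}(\mathcal{G})\le C\sqrt{n}$; that is, $\mathrm{PoA}_{\max}(\mathcal{G})=O(\sqrt{n})$.
   Context: A weighted congestion game consists of a finite set $[n]=\{1,\dots,n\}$ of players, a finite set $E$ of resources, for each player $i$ a weight $w_i>0$ and a nonempty finite strategy set $\Sigma_i\subseteq 2^E$, and for each resource $e$ a latency function $\ell_e:\mathbb{R}_{\ge 0}\to\mathbb{R}_{\ge 0}$. It is unweighted if $w_i=1$ for all $i$. Affine latency functions means $\ell_e(x)=\alpha_e x+\beta_e$ with $\alpha_e,\beta_e\ge 0$. For a strategy profile $S=(s_1,\dots,s_n)$, the congestion of $e$ is $L_e(S)=\sum_{i:\,e\in s_i}w_i$ and the cost of player $i$ is $c_i(S)=\sum_{e\in s_i}\ell_e(L_e(S))$. The maximum social cost is $\mathrm{MAX}(S)=\max_{i\in[n]}c_i(S)$. A pure Nash equilibrium (PNE) is a profile $S$ with $c_i(S)\le c_i(S_{-i}\diamond t)$ for all $i$ and $t\in\Sigma_i$, where $(S_{-i}\diamond t)$ replaces $s_i$ by $t$. $\mathrm{PoA}_{\max}(\mathcal{G})=\max_{S\ \mathrm{PNE}}\mathrm{MAX}(S)/\min_{S'}\mathrm{MAX}(S')$. *)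

From mathcomp Require Import all_boot.
From Stdlib Require Import Reals.

Set Implicit Arguments.
Unset Strict Implicit.
Unset Printing Implicit Defensive.

Section CongestionGames.
Variables (n : nat) (E : finType).

Definition profile := 'I_n -> {set E}.

Definition congestion (w : 'I_n -> R) (S : profile) (e : E) : R :=
  \big[Rplus/0%R]_(i < n | e \in S i) w i.

Definition cost (ell : E -> R -> R) (w : 'I_n -> R) (S : profile) (i : 'I_n) : R :=
  \big[Rplus/0%R]_(e in S i) ell e (congestion w S e).

(* Maximum social cost MAX(S) = max_i c_i(S) (folded with base 0, which is
   harmless since costs are nonnegative for nonnegative latencies and n >= 1). *)
Definition MAXcost (ell : E -> R -> R) (w : 'I_n -> R) (S : profile) : R :=
  \big[Rmax/0%R]_(i < n) cost ell w S i.

Definition deviate (S : profile) (i : 'I_n) (t : {set E}) : profile :=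
  fun j => if j == i then t else S j.

Definition feasible (Sigma : 'I_n -> {set {set E}}) (S : profile) : Prop :=
  forall i, S i \in Sigma i.

Definition is_PNE (Sigma : 'I_n -> {set {set E}}) (ell : E -> R -> R)
    (w : 'I_n -> R) (S : profile) : Prop :=
  feasible Sigma S /\
  forall (i : 'I_n) (t : {set E}), t \in Sigma i ->
    (cost ell w S i <= cost ell w (deviate S i t) i)%R.

Definition affine_latency (alpha beta : E -> R) : E -> R -> R :=
  fun e x => (alpha e * x + beta e)%R.

Definition unit_weights : 'I_n -> R := fun _ => 1%R.

End CongestionGames.

From Pilot Require Import Defs.
From HB Require Import structures.
From mathcomp Require Import all_boot.
From Stdlib Require Import Reals Lra Psatz.

(* Proof of PoA_max = O(sqrt n) for unweighted affine congestion games, with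
   constant C = 3.  Let S be a pure Nash equilibrium, S' any feasible profile,
   OPT = MAX(S') and s = sqrt n.

   1. Sum of costs.  Double counting gives SUM(S) = sum_e L_e ell_e(L_e).
      Deviating to s'_j raises every load by at most one, so summing the Nash
      inequalities, SUM(S) <= sum_e L'_e ell_e(L_e + 1); the pointwise affine
      inequality y(a(x+1)+b) <= x(ax+b)/2 + 3y(ay+b)/2 then yields
      SUM(S) <= 3 SUM(S') <= 3 n OPT.
   2. One player.  By the Nash condition c_i(S) <= sum_{e in s'_i} (a_e L_e
      + a_e + b_e).  The second part is at most c_i(S') <= OPT since loads in
      S' are >= 1 on s'_i.  For the first, a L <= a L^2/(2s) + (s/2) a, and
      sum_e a_e L_e^2 <= SUM(S) <= 3 n OPT = 3 s^2 OPT; altogether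
      c_i(S) <= (3/2) s OPT + (s/2) OPT + OPT <= 3 s OPT. *)

Set Implicit Arguments.
Unset Strict Implicit.
Unset Printing Implicit Defensive.

Local Open Scope R_scope.

Lemma RplusA : associative Rplus. Proof. by move=> *; ring. Qed.
HB.instance Definition _ :=
  Monoid.isComLaw.Build R 0 Rplus RplusA Rplus_comm Rplus_0_l.

Lemma sumR_le (I : Type) (r : seq I) (P : pred I) (F G : I -> R) :
  (forall i, P i -> F i <= G i) ->
  \big[Rplus/0]_(i <- r | P i) F i <= \big[Rplus/0]_(i <- r | P i) G i.
Proof. by move=> H; apply: (big_ind2 (fun x y => x <= y)) => // *; lra. Qed.

Lemma sumR_mull (I : Type) (r : seq I) (P : pred I) (F : I -> R) c :
  \big[Rplus/0]_(i <- r | P i) (c * F i) = c * \big[Rplus/0]_(i <- r | P i) F i.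
Proof. by apply: (big_ind2 (fun x y => x = c * y)) => [|? ? ? ? -> ->|//]; ring. Qed.

Lemma sumR_mulr (I : Type) (r : seq I) (P : pred I) (F : I -> R) c :
  \big[Rplus/0]_(i <- r | P i) (F i * c) = \big[Rplus/0]_(i <- r | P i) F i * c.
Proof. by apply: (big_ind2 (fun x y => x = y * c)) => [|? ? ? ? -> ->|//]; ring. Qed.

Lemma sumR_subset (T : finType) (A : {set T}) (F : T -> R) :
  (forall i, 0 <= F i) ->
  \big[Rplus/0]_(i in A) F i <= \big[Rplus/0]_(i : T) F i.
Proof.
move=> F_ge0; rewrite big_mkcond /=; apply: sumR_le => i _.
by case: (i \in A); [apply: Rle_refl | apply: F_ge0].
Qed.

Lemma sumR_1 (I : Type) (r : seq I) (P : pred I) :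
  \big[Rplus/0]_(i <- r | P i) 1 = INR (count P r).
Proof.
elim: r => [|x r IH]; first by rewrite big_nil.
rewrite big_cons IH /=; case: (P x) => //.
by rewrite add1n S_INR; ring.
Qed.

Lemma sumR_const_ord k c : \big[Rplus/0]_(j < k) c = INR k * c.
Proof.
rewrite big_const_ord; elim: k => [|k IH]; first by rewrite /=; ring.
by rewrite iterS IH S_INR; ring.
Qed.

Lemma le_bigmaxR (I : eqType) (r : seq I) (F : I -> R) j :
  j \in r -> F j <= \big[Rmax/0]_(i <- r) F i.
Proof.
elim: r => [|x r IH] //; rewrite big_cons in_cons => /orP [/eqP ->|/IH h].
  exact: Rmax_l.
exact: Rle_trans h (Rmax_r _ _).
Qed.

Lemma bigmaxR_ge0 (I : Type) (r : seq I) (F : I -> R) :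
  0 <= \big[Rmax/0]_(i <- r) F i.
Proof.
elim: r => [|x r IH]; first by rewrite big_nil; lra.
by rewrite big_cons; apply: Rle_trans IH (Rmax_r _ _).
Qed.

Lemma affine_smoothness (a b x y : R) :
  0 <= a -> 0 <= b -> 0 <= x -> 0 <= y -> y <= y * y ->
  y * (a * (x + 1) + b) <= / 2 * (x * (a * x + b)) + 3 / 2 * (y * (a * y + b)).
Proof.
move=> a0 b0 x0 y0 yy.
have p1 : 0 <= a * ((x - y) * (x - y)) by apply: Rmult_le_pos => //; apply: Rle_0_sqr.
have p2 : 0 <= a * (y * y - y) by apply: Rmult_le_pos; lra.
have p3 : 0 <= b * x by apply: Rmult_le_pos.
have p4 : 0 <= b * y by apply: Rmult_le_pos.
nra.
Qed.

Lemma linear_le_quadratic (s a x : R) :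
  0 < s -> 0 <= a -> a * x <= / (2 * s) * (a * (x * x)) + s / 2 * a.
Proof.
move=> s0 a0.
have sq : 0 <= / (2 * s) * (a * ((x - s) * (x - s))).
  apply: Rmult_le_pos; first by apply/Rlt_le/Rinv_0_lt_compat; lra.
  by apply: Rmult_le_pos => //; apply: Rle_0_sqr.
have expand : / (2 * s) * (a * ((x - s) * (x - s)))
    = / (2 * s) * (a * (x * x)) + s / 2 * a - a * x by field; lra.
lra.
Qed.

Section UnweightedAffineGame.
Variables (n : nat) (E : finType) (alpha beta : E -> R).
Hypotheses (alpha_ge0 : forall e, 0 <= alpha e) (beta_ge0 : forall e, 0 <= beta e).

Local Notation w := (@unit_weights n).
Local Notation ell := (affine_latency alpha beta).
Local Notation load S e := (congestion w S e).
Local Notation cost S i := (cost ell w S i).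

Definition social_cost (S : profile n E) : R := \big[Rplus/0]_(j < n) cost S j.

Lemma load_count (S : profile n E) e :
  load S e = INR (count (fun j => e \in S j) (index_enum 'I_n)).
Proof. exact: sumR_1. Qed.

Lemma load_ge0 (S : profile n E) e : 0 <= load S e.
Proof. by rewrite load_count; apply: pos_INR. Qed.

Lemma load_le_sq (S : profile n E) e : load S e <= load S e * load S e.
Proof.
rewrite load_count; case: count => [|k]; first by rewrite /=; lra.
have : 1 <= INR k.+1 by apply: (le_INR 1); apply/leP.
nra.
Qed.

Lemma load_ge1 (S : profile n E) e i : e \in S i -> 1 <= load S e.
Proof.
move=> eSi; rewrite load_count; apply: (le_INR 1); apply/leP.
by rewrite -has_count; apply/hasP; exists i => //; exact: mem_index_enum.
Qed.

Lemma load_deviate (S : profile n E) i t e :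
  load (deviate S i t) e <= load S e + 1.
Proof.
rewrite /congestion /unit_weights big_mkcond [X in _ <= X + _]big_mkcond /=.
apply: (Rle_trans _ (\big[Rplus/0]_(j < n)
    ((if e \in S j then 1 else 0) + (if j == i then 1 else 0)))).
  apply: sumR_le => j _; rewrite /deviate.
  by case: (j == i) => /=; case: (e \in t); case: (e \in S j); lra.
by rewrite big_split -[X in _ + X <= _]big_mkcond big_pred1_eq; apply: Rle_refl.
Qed.

Lemma sum_over_players (S : profile n E) (f : E -> R) :
  \big[Rplus/0]_(j < n) \big[Rplus/0]_(e in S j) f e =
  \big[Rplus/0]_(e : E) (load S e * f e).
Proof.
rewrite (eq_bigr (fun j => \big[Rplus/0]_(e : E) (if e \in S j then f e else 0)));
  last by move=> j _; rewrite big_mkcond.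
rewrite exchange_big; apply: eq_bigr => e _.
rewrite /congestion /unit_weights -sumR_mulr big_mkcond [in RHS]big_mkcond /=.
by apply: eq_bigr => j _; case: (e \in S j); ring.
Qed.

Lemma social_costE (S : profile n E) :
  social_cost S = \big[Rplus/0]_(e : E) (load S e * (alpha e * load S e + beta e)).
Proof. exact: sum_over_players. Qed.

(* Nash condition, with the deviation cost bounded through load_deviate. *)
Lemma PNE_cost_le Sigma (S S' : profile n E) i :
  is_PNE Sigma ell w S -> feasible Sigma S' ->
  cost S i <= \big[Rplus/0]_(e in S' i) (alpha e * (load S e + 1) + beta e).
Proof.
move=> [_ nash] fS'; apply: Rle_trans (nash i (S' i) (fS' i)) _.
rewrite /Defs.cost {1}/deviate eqxx; apply: sumR_le => e _.
have := Rmult_le_compat_l _ _ _ (alpha_ge0 e) (load_deviate S i (S' i) e).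
rewrite /affine_latency; lra.
Qed.

Lemma social_cost_PNE Sigma (S S' : profile n E) :
  is_PNE Sigma ell w S -> feasible Sigma S' ->
  social_cost S <= 3 * social_cost S'.
Proof.
move=> PNE fS'.
have nash_sum : social_cost S <= \big[Rplus/0]_(e : E)
    (load S' e * (alpha e * (load S e + 1) + beta e)).
  rewrite /social_cost -sum_over_players; apply: sumR_le => j _; exact: (PNE_cost_le j PNE fS').
have smooth : \big[Rplus/0]_(e : E) (load S' e * (alpha e * (load S e + 1) + beta e))
    <= / 2 * social_cost S + 3 / 2 * social_cost S'.
  rewrite !social_costE -!sumR_mull -big_split; apply: sumR_le => e _.
  by apply: affine_smoothness;
    [apply: alpha_ge0 | apply: beta_ge0 | apply: load_ge0 | apply: load_ge0 | apply: load_le_sq].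
lra.
Qed.

Lemma cost_le_MAX (S : profile n E) i : cost S i <= MAXcost ell w S.
Proof. exact/le_bigmaxR/mem_index_enum. Qed.

Lemma social_cost_le_MAX (S : profile n E) :
  social_cost S <= INR n * MAXcost ell w S.
Proof.
rewrite -sumR_const_ord; apply: sumR_le => j _; exact: cost_le_MAX.
Qed.

Lemma sum_alpha_load_sq_le (S : profile n E) :
  \big[Rplus/0]_(e : E) (alpha e * (load S e * load S e)) <= social_cost S.
Proof.
rewrite social_costE; apply: sumR_le => e _.
have := load_ge0 S e; have := alpha_ge0 e; have := beta_ge0 e; nra.
Qed.

(* Loads are at least one on a player's own resources, so the constant part
   of its latencies is at most its cost. *)
Lemma sum_latency_at_1_le_cost (S : profile n E) i :
  \big[Rplus/0]_(e in S i) (alpha e + beta e) <= cost S i.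
Proof.
apply: sumR_le => e eSi; rewrite /affine_latency.
have := load_ge1 eSi; have := alpha_ge0 e; nra.
Qed.

Lemma PNE_player_cost Sigma (S S' : profile n E) i :
  1 <= INR n -> is_PNE Sigma ell w S -> feasible Sigma S' ->
  cost S i <= 3 * sqrt (INR n) * MAXcost ell w S'.
Proof.
move=> hn PNE fS'.
set OPT := MAXcost ell w S'; set s := sqrt (INR n).
have ss : s * s = INR n by apply: sqrt_sqrt; lra.
have s_ge1 : 1 <= s by rewrite /s -sqrt_1; apply: sqrt_le_1_alt.
have OPT_ge0 : 0 <= OPT by apply: bigmaxR_ge0.
have const_part : \big[Rplus/0]_(e in S' i) (alpha e + beta e) <= OPT.
  exact: Rle_trans (sum_latency_at_1_le_cost S' i) (cost_le_MAX S' i).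
have alpha_part : \big[Rplus/0]_(e in S' i) alpha e <= OPT.
  apply: Rle_trans const_part; apply: sumR_le => e _; have := beta_ge0 e; lra.
have quad_part : \big[Rplus/0]_(e in S' i) (alpha e * (load S e * load S e))
    <= 3 * INR n * OPT.
  have restrict : \big[Rplus/0]_(e in S' i) (alpha e * (load S e * load S e))
      <= \big[Rplus/0]_(e : E) (alpha e * (load S e * load S e)).
    apply: sumR_subset => e; apply: Rmult_le_pos => //.
    by apply: Rmult_le_pos; apply: load_ge0.
  have := sum_alpha_load_sq_le S; have := social_cost_PNE PNE fS'.
  have := social_cost_le_MAX S'; rewrite -/OPT; lra.
have linear_part : \big[Rplus/0]_(e in S' i) (alpha e * load S e)
    <= / (2 * s) * (3 * INR n * OPT) + s / 2 * OPT.
  apply: Rle_trans (_ : _ <= \big[Rplus/0]_(e in S' i)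
      (/ (2 * s) * (alpha e * (load S e * load S e)) + s / 2 * alpha e)) _.
    by apply: sumR_le => e _; apply: linear_le_quadratic; [lra | apply: alpha_ge0].
  rewrite big_split !sumR_mull; apply: Rplus_le_compat.
    by apply: Rmult_le_compat_l => //; apply/Rlt_le/Rinv_0_lt_compat; lra.
  by apply: Rmult_le_compat_l => //; lra.
have rescale : / (2 * s) * (3 * INR n * OPT) = 3 / 2 * s * OPT.
  by rewrite -ss; field; lra.
have OPT_le : OPT <= s * OPT by nra.
have nash := PNE_cost_le i PNE fS'.
rewrite (eq_bigr (fun e => alpha e * load S e + (alpha e + beta e))) in nash;
  last by move=> e _; ring.
rewrite big_split /= in nash; lra.
Qed.

End UnweightedAffineGame.

Close Scope R_scope.

Theorem mainTheorem14 :
  exists C : R, (0 < C)%R /\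
  forall (n : nat), (1 <= n)%N ->
  forall (E : finType) (Sigma : 'I_n -> {set {set E}}),
    (forall i, Sigma i != set0) ->
  forall (alpha beta : E -> R),
    (forall e, 0 <= alpha e)%R -> (forall e, 0 <= beta e)%R ->
  forall (S S' : profile n E),
    is_PNE Sigma (affine_latency alpha beta) (@unit_weights n) S ->
    feasible Sigma S' ->
    (MAXcost (affine_latency alpha beta) (@unit_weights n) S
       <= C * sqrt (INR n) * MAXcost (affine_latency alpha beta) (@unit_weights n) S')%R.
Proof.
exists 3%R; split; first lra.
move=> n n_ge1 E Sigma _ alpha beta alpha_ge0 beta_ge0 S S' PNE fS'.
have OPT_ge0 := bigmaxR_ge0 (index_enum 'I_n)
  (Defs.cost (affine_latency alpha beta) (@unit_weights n) S').
have s_ge0 := sqrt_pos (INR n).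
have INR_n_ge1 : (1 <= INR n)%R by apply: (le_INR 1); apply/leP.
rewrite {1}/MAXcost; apply: (big_ind (fun x => x <= 3 * sqrt (INR n) * _)%R).
- by apply: Rmult_le_pos => //; lra.
- by move=> x y; apply: Rmax_lub.
- by move=> i _; exact: (PNE_player_cost alpha_ge0 beta_ge0 i INR_n_ge1 PNE fS').
Qed.
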